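(* The function $F:\Delta^K\to\mathbb{R}^{K+1}$ described in the context is $\lambda(5+\sqrt K)$-Lipschitz continuous with respect to the Euclidean norm, i.e., \[ \|F(x)-F(y)\|\le\lambda(5+\sqrt K)\|x-y\|\qquad\text{for all }x,y\in\Delta^K. \]
   Context: Parameters: integer $K\ge 1$, $\lambda>0$, $\mu\in(0,1]$, $p_1,\dots,p_K\in[0,1]$. $\Delta^K=\{x\in\mathbb{R}^{K+1}:\sum_{k=0}^K x_k=1,\ x_k\ge0\}$ (coordinates indexed from $0$). $F$ is given by $F_0(x)=-\lambda x_0\sum_{k=1}^K(\frac{\mu}{K}+(1-\mu)x_k)p_k$ and, for $k=1,\dots,K$, $F_k(x)=\lambda x_0(\frac{\mu}{K}+(1-\mu)x_k)p_k+\lambda x_k\sum_{k'=1}^K(p_k-p_{k'})x_{k'}$. *)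

From mathcomp Require Import all_boot all_order all_algebra.
From mathcomp Require Import reals.
Set Implicit Arguments. Unset Strict Implicit. Unset Printing Implicit Defensive.
Import Order.TTheory GRing.Theory Num.Theory.
Local Open Scope ring_scope.

Definition simplex (R : realType) (K : nat) (x : 'I_K.+1 -> R) : Prop :=
  (forall k, 0 <= x k) /\ \sum_(k < K.+1) x k = 1.

Definition enorm (R : realType) (K : nat) (x : 'I_K.+1 -> R) : R :=
  Num.sqrt (\sum_(k < K.+1) x k ^+ 2).

(* The vector field F; p : 'I_K.+1 -> R with only p 1 .. p K used
   (p at index 0 is irrelevant). *)
Definition Fvec (R : realType) (K : nat) (lam mu : R) (p : 'I_K.+1 -> R)
    (x : 'I_K.+1 -> R) (k : 'I_K.+1) : R :=
  if val k == 0%N then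
    - lam * x ord0 * \sum_(j < K.+1 | val j != 0%N)
                        (mu / K%:R + (1 - mu) * x j) * p j
  else
    lam * x ord0 * (mu / K%:R + (1 - mu) * x k) * p k
    + lam * x k * \sum_(j < K.+1 | val j != 0%N) (p k - p j) * x j.

From mathcomp Require Import all_boot all_order all_algebra.
From mathcomp Require Import reals.
From mathcomp Require Import ring lra.
Import Order.TTheory GRing.Theory Num.Theory.
Local Open Scope ring_scope.

(* On the simplex the sum of x_1, ..., x_K is 1 - x_0, and F(x) - F(y) splits as
     lam * (- (P x - P y) e + (x_0 - y_0) g + h .* (x - y)),
   where P x = sum_{j >= 1} p_j x_j ([pmass]) and the coefficient vectors
   e, g, h ([mass_coef], [origin_coef], [diag_coef]) satisfy |e| <= 1,
   |g| <= 3 and |h_k| <= 2.  Cauchy-Schwarz gives |P x - P y| <= sqrt K |x - y|,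
   trivially |x_0 - y_0| <= |x - y|, and the triangle inequality adds up the
   constant sqrt K + 3 + 2. *)

Section EuclideanNorm.
Context {R : realType} {n : nat}.
Implicit Types (u v : 'I_n.+1 -> R) (c : R).

Lemma sumsq_ge0 u : 0 <= \sum_k u k ^+ 2.
Proof. by apply: sumr_ge0 => k _; apply: sqr_ge0. Qed.

Lemma enorm_ge0 u : 0 <= enorm u.
Proof. exact: sqrtr_ge0. Qed.

Lemma eq_enorm {u v} : u =1 v -> enorm u = enorm v.
Proof. by move=> uv; rewrite /enorm; congr Num.sqrt; apply: eq_bigr => k _; rewrite uv. Qed.

Lemma enormZ c u : enorm (fun k => c * u k) = `|c| * enorm u.
Proof.
rewrite /enorm (eq_bigr (fun k => c ^+ 2 * u k ^+ 2)) => [|k _]; last exact: exprMn.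
by rewrite -mulr_sumr sqrtrM ?sqr_ge0 // sqrtr_sqr.
Qed.

Lemma ler_enorm u v : (forall k, `|u k| <= `|v k|) -> enorm u <= enorm v.
Proof.
move=> uv; rewrite /enorm ler_sqrt ?sumsq_ge0 //; apply: ler_sum => k _.
by rewrite -(real_normK (num_real (u k))) -(real_normK (num_real (v k))) ler_sqr ?nnegrE.
Qed.

Lemma ler_coord_enorm u i : `|u i| <= enorm u.
Proof.
rewrite /enorm -sqrtr_sqr ler_sqrt ?sumsq_ge0 // (bigD1 i) //= lerDl.
by apply: sumr_ge0 => k _; apply: sqr_ge0.
Qed.

Lemma enorm_le_sum u : enorm u <= \sum_k `|u k|.
Proof.
have S0 : 0 <= \sum_k `|u k| by apply: sumr_ge0.
rewrite /enorm -(ger0_norm S0) -sqrtr_sqr ler_sqrt ?sqr_ge0 // expr2 mulr_suml.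
apply: ler_sum => k _; rewrite -(real_normK (num_real (u k))) expr2 ler_wpM2l //.
by rewrite (bigD1 k) //= lerDl; apply: sumr_ge0.
Qed.

Lemma cauchy_schwarz u v : `|\sum_k u k * v k| <= enorm u * enorm v.
Proof.
rewrite /enorm -sqrtrM ?sumsq_ge0 // -sqrtr_sqr ler_sqrt; last first.
  by apply: mulr_ge0; apply: sumsq_ge0.
set A := \sum_k u k ^+ 2; set B := \sum_k v k ^+ 2; set C := \sum_k u k * v k.
have [A0|A_neq0] := eqVneq A 0.
  have u0 k : u k = 0.
    by apply/eqP; rewrite -sqrf_eq0; apply/eqP/(psumr_eq0P _ A0) => // *; apply: sqr_ge0.
  by rewrite A0 mul0r /C big1 ?expr0n // => k _; rewrite u0 mul0r.
have A_gt0 : 0 < A by rewrite lt_def A_neq0 sumsq_ge0.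
have : 0 <= \sum_k (C * u k - A * v k) ^+ 2 by apply: sumsq_ge0.
have -> : \sum_k (C * u k - A * v k) ^+ 2 = A * (A * B - C ^+ 2).
  rewrite (eq_bigr (fun k => C ^+ 2 * u k ^+ 2 - 2 * C * A * (u k * v k)
                             + A ^+ 2 * v k ^+ 2)) => [|k _]; last by ring.
  by rewrite !big_split /= sumrN -!mulr_sumr -/A -/B -/C; ring.
by rewrite pmulr_rge0 // subr_ge0.
Qed.

Lemma ler_enormD u v : enorm (fun k => u k + v k) <= enorm u + enorm v.
Proof.
have uv0 : 0 <= enorm u + enorm v by rewrite addr_ge0 ?enorm_ge0.
rewrite -(ger0_norm uv0) -sqrtr_sqr /enorm ler_sqrt ?sqr_ge0 //.
rewrite (eq_bigr (fun k => u k ^+ 2 + 2 * (u k * v k) + v k ^+ 2)) => [|k _]; last by ring.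
rewrite !big_split /= -mulr_sumr sqrrD !sqr_sqrtr ?sumsq_ge0 // lerD2r lerD2l.
by have := le_trans (ler_norm _) (cauchy_schwarz u v); rewrite /enorm; lra.
Qed.

End EuclideanNorm.

Lemma sum_split_ord0 (V : nmodType) (n : nat) (v : 'I_n.+1 -> V) :
  \sum_k v k = v ord0 + \sum_(j < n.+1 | val j != 0%N) v j.
Proof. by rewrite (bigD1 ord0). Qed.

Lemma sum_nonzero_const (R : pzSemiRingType) (n : nat) (c : R) :
  \sum_(j < n.+1 | val j != 0%N) c = n%:R * c.
Proof. by rewrite big_mkcond big_ord_recl /= add0r sumr_const card_ord mulr_natl. Qed.

Section VectorField.
Context {R : realType} {K : nat} {lam mu : R} {p : 'I_K.+1 -> R}.
Hypotheses (K_gt0 : (0 < K)%N) (mu_ge0 : 0 <= mu) (mu_le1 : mu <= 1).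
Hypothesis p01 : forall k : 'I_K.+1, val k != 0%N -> 0 <= p k <= 1.
Implicit Types (x y : 'I_K.+1 -> R) (k : 'I_K.+1).

Let compl_mu_ge0 : 0 <= 1 - mu. Proof. by rewrite subr_ge0. Qed.
Let compl_mu_le1 : 1 - mu <= 1. Proof. by rewrite lerBlDr lerDl. Qed.

Definition weight x k := mu / K%:R + (1 - mu) * x k.
Definition outflow x := \sum_(j < K.+1 | val j != 0%N) weight x j * p j.
Definition pmass x := \sum_(j < K.+1 | val j != 0%N) p j * x j.

Definition mass_coef y k := if val k == 0%N then (1 - mu) * y ord0 else y k.
Definition origin_coef x y k :=
  if val k == 0%N then - outflow x else p k * (weight x k - y k).
Definition diag_coef x y k :=
  if val k == 0%N then 0
  else (1 - mu) * p k * y ord0 + (p k * (1 - x ord0) - pmass x).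

Lemma simplex_sum_nonzero {x} : simplex x ->
  \sum_(j < K.+1 | val j != 0%N) x j = 1 - x ord0.
Proof. by case=> _; rewrite sum_split_ord0 => <-; rewrite addrAC subrr add0r. Qed.

Lemma simplex_coord {x} : simplex x -> forall k, 0 <= x k <= 1.
Proof.
move=> [x_ge0 <-] k; rewrite x_ge0 (bigD1 k) //= lerDl.
exact: sumr_ge0.
Qed.

Lemma Fvec_nonzeroE {x} k : simplex x -> val k != 0%N ->
  Fvec lam mu p x k =
  lam * x ord0 * weight x k * p k + lam * x k * (p k * (1 - x ord0) - pmass x).
Proof.
move=> sx k_neq0; rewrite /Fvec (negbTE k_neq0); congr (_ + _ * _).
rewrite (eq_bigr (fun j => p k * x j - p j * x j)) => [|j _]; last by ring.
by rewrite sumrB -mulr_sumr simplex_sum_nonzero.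
Qed.

Lemma outflowB x y : outflow x - outflow y = (1 - mu) * (pmass x - pmass y).
Proof.
rewrite /outflow /pmass -!sumrB mulr_sumr; apply: eq_bigr => j _.
by rewrite /weight; ring.
Qed.

Lemma Fvec_subE {x y} k : simplex x -> simplex y ->
  Fvec lam mu p x k - Fvec lam mu p y k =
  lam * (- (pmass x - pmass y) * mass_coef y k
         + (x ord0 - y ord0) * origin_coef x y k
         + diag_coef x y k * (x k - y k)).
Proof.
move=> sx sy; rewrite /mass_coef /origin_coef /diag_coef.
have [k0|k_neq0] := eqVneq (val k) 0%N.
  rewrite /Fvec k0 /= -/(outflow x) -/(outflow y).
  have -> : outflow y = outflow x - (outflow x - outflow y) by ring.
  by rewrite outflowB; ring.
by rewrite !Fvec_nonzeroE // /weight; ring.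
Qed.

Lemma enorm_simplex_le1 {x} : simplex x -> enorm x <= 1.
Proof.
move=> [x_ge0 <-]; apply: le_trans (enorm_le_sum _) _.
by rewrite le_eqVlt (eq_bigr _ (fun k _ => ger0_norm (x_ge0 k))) eqxx.
Qed.

Lemma weight_ge0 {x} k : simplex x -> 0 <= weight x k.
Proof.
move=> sx; have /andP[xk0 _] := simplex_coord sx k.
by rewrite addr_ge0 ?divr_ge0 ?mulr_ge0.
Qed.

Lemma sum_weight {x} : simplex x ->
  \sum_(j < K.+1 | val j != 0%N) weight x j = mu + (1 - mu) * (1 - x ord0).
Proof.
move=> sx; rewrite big_split /= sum_nonzero_const -mulr_sumr simplex_sum_nonzero //.
by rewrite mulrC divfK // pnatr_eq0 -lt0n.
Qed.

Lemma pmass_bounds {x} : simplex x -> 0 <= pmass x <= 1 - x ord0.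
Proof.
move=> sx; rewrite -simplex_sum_nonzero // sumr_ge0 /=; last first.
  by move=> j /p01/andP[pj0 _]; have /andP[xj0 _] := simplex_coord sx j; exact: mulr_ge0.
apply: ler_sum => j /p01/andP[pj0 pj1]; have /andP[xj0 _] := simplex_coord sx j.
by rewrite ler_piMl.
Qed.

Lemma outflow_bounds {x} : simplex x -> 0 <= outflow x <= 1.
Proof.
move=> sx; have /andP[x00 x01] := simplex_coord sx ord0.
rewrite sumr_ge0 /= => [|j /p01/andP[pj0 _]]; last by rewrite mulr_ge0 ?weight_ge0.
apply: (@le_trans _ _ (\sum_(j < K.+1 | val j != 0%N) weight x j)).
  by apply: ler_sum => j /p01/andP[_ pj1]; rewrite ler_piMr ?weight_ge0.
by rewrite sum_weight //; have := mulr_ge0 compl_mu_ge0 x00; lra.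
Qed.

Lemma enorm_mass_coef_le1 {y} : simplex y -> enorm (mass_coef y) <= 1.
Proof.
move=> sy; apply: le_trans (enorm_simplex_le1 sy); apply: ler_enorm => k.
rewrite /mass_coef; case: ifP => // /eqP k0; have -> : k = ord0 by apply: val_inj.
by rewrite normrM ger0_norm // ler_piMl.
Qed.

Lemma ler_pmassB x y :
  `|pmass x - pmass y| <= Num.sqrt K%:R * enorm (fun k => x k - y k).
Proof.
pose q k := if val k == 0%N then 0 else p k.
have -> : pmass x - pmass y = \sum_k q k * (x k - y k).
  rewrite sum_split_ord0 /q /= mul0r add0r /pmass -sumrB.
  by apply: eq_bigr => j /negbTE ->; rewrite mulrBr.
apply: le_trans (cauchy_schwarz _ _) _; apply: ler_wpM2r; first exact: enorm_ge0.
rewrite /enorm ler_sqrt ?ler0n // sum_split_ord0 /q /= expr0n add0r.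
rewrite -[leRHS]mulr1 -sum_nonzero_const; apply: ler_sum => j j_neq0.
by rewrite (negbTE j_neq0); have /andP[pj0 pj1] := p01 j j_neq0; rewrite expr_le1.
Qed.

Lemma enorm_origin_coef_le3 {x y} : simplex x -> simplex y -> enorm (origin_coef x y) <= 3.
Proof.
move=> sx sy; apply: le_trans (enorm_le_sum _) _.
rewrite sum_split_ord0 /origin_coef /= normrN.
have /andP[Ox0 Ox1] := outflow_bounds sx; have /andP[Py0 Py1] := pmass_bounds sy.
apply: (@le_trans _ _ (outflow x + (outflow x + pmass y))).
  rewrite ger0_norm // lerD2l /outflow /pmass -big_split /=.
  apply: ler_sum => j j_neq0; rewrite (negbTE j_neq0).
  have /andP[pj0 _] := p01 j j_neq0; have /andP[yj0 _] := simplex_coord sy j.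
  rewrite normrM ger0_norm // [weight x j * _]mulrC -mulrDr ler_wpM2l //.
  by apply: le_trans (ler_normB _ _) _; rewrite !ger0_norm ?weight_ge0.
have /andP[y00 _] := simplex_coord sy ord0; lra.
Qed.

Lemma diag_coef_le2 {x y} k : simplex x -> simplex y -> `|diag_coef x y k| <= 2.
Proof.
move=> sx sy; rewrite /diag_coef; case: ifP => [_|/negbT k_neq0]; first by rewrite normr0.
have /andP[pk0 pk1] := p01 k k_neq0; have /andP[P0 P1] := pmass_bounds sx.
have /andP[x00 x01] := simplex_coord sx ord0; have /andP[y00 y01] := simplex_coord sy ord0.
have a0 := mulr_ge0 (mulr_ge0 compl_mu_ge0 pk0) y00.
have a1 := mulr_ile1 (mulr_ge0 compl_mu_ge0 pk0) y00
  (mulr_ile1 compl_mu_ge0 pk0 compl_mu_le1 pk1) y01.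
have b0 : 0 <= p k * (1 - x ord0) by rewrite mulr_ge0 ?subr_ge0.
have b1 : p k * (1 - x ord0) <= 1 - x ord0 by rewrite ler_piMl ?subr_ge0.
by rewrite ler_norml; apply/andP; split; lra.
Qed.

Lemma enorm_mass_term {x y} : simplex y ->
  enorm (fun k => - (pmass x - pmass y) * mass_coef y k)
  <= Num.sqrt K%:R * enorm (fun k => x k - y k).
Proof.
move=> sy; rewrite enormZ normrN -[leRHS]mulr1.
by apply: ler_pM; rewrite ?normr_ge0 ?enorm_ge0 ?ler_pmassB ?enorm_mass_coef_le1.
Qed.

Lemma enorm_origin_term {x y} : simplex x -> simplex y ->
  enorm (fun k => (x ord0 - y ord0) * origin_coef x y k)
  <= 3 * enorm (fun k => x k - y k).
Proof.
move=> sx sy; rewrite enormZ mulrC.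
apply: ler_pM; rewrite ?normr_ge0 ?enorm_ge0 ?enorm_origin_coef_le3 //.
exact: (ler_coord_enorm (fun k => x k - y k)).
Qed.

Lemma enorm_diag_term {x y} : simplex x -> simplex y ->
  enorm (fun k => diag_coef x y k * (x k - y k)) <= 2 * enorm (fun k => x k - y k).
Proof.
move=> sx sy; rewrite -[2]ger0_norm // -enormZ; apply: ler_enorm => k.
by rewrite !normrM; apply: ler_wpM2r; rewrite // normr_nat diag_coef_le2.
Qed.

End VectorField.

Theorem lemma6 (R : realType) (K : nat) (lam mu : R) (p : 'I_K.+1 -> R) :
  (1 <= K)%N -> 0 < lam -> 0 < mu -> mu <= 1 ->
  (forall k : 'I_K.+1, (0 < val k)%N -> 0 <= p k <= 1) ->
  forall x y : 'I_K.+1 -> R, simplex x -> simplex y ->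
    enorm (fun k => Fvec lam mu p x k - Fvec lam mu p y k)
    <= lam * (5 + Num.sqrt K%:R) * enorm (fun k => x k - y k).
Proof.
move=> K_gt0 lam_gt0 /ltW mu_ge0 mu_le1 p01 x y sx sy.
have {}p01 k : val k != 0%N -> 0 <= p k <= 1 by rewrite -lt0n; apply: p01.
rewrite (eq_enorm (fun k => Fvec_subE k sx sy)) enormZ gtr0_norm // -mulrA.
apply: ler_wpM2l; first exact: ltW.
apply: le_trans (ler_enormD _ _) _; apply: le_trans (lerD (ler_enormD _ _) (lexx _)) _.
have := lerD (lerD (enorm_mass_term (x := x) mu_ge0 mu_le1 p01 sy)
                   (enorm_origin_term K_gt0 mu_ge0 mu_le1 p01 sx sy))
             (enorm_diag_term mu_ge0 mu_le1 p01 sx sy).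
have := enorm_ge0 (fun k => x k - y k); lra.
Qed.
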